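(* In the Chung–Lu random graph model with expected degree sequence $(d_1,\dots,d_n)$, let $s\neq t$ be vertices and $r\ge 1$ an integer. Then $$E[SP_r(s,t)]\ \ge\ p_{st}\left(\frac{S_2}{S}\right)^{r-1}\left(1-\frac{r(r+1)\,p_{\max}}{2}\cdot\frac{S}{S_2}\right).$$
   Context: Chung–Lu model: given $d_1,\dots,d_n>0$ with $S=\sum_{i=1}^n d_i$ and $\max_i d_i^2\le S$, the random undirected graph on $\{1,\dots,n\}$ contains each edge $\{i,j\}$ (including loops $i=j$) independently with probability $p_{ij}=d_id_j/S$. Notation: $S_2=\sum_{i=1}^n d_i^2$, $d_{\max}=\max_i d_i$, $p_{\max}=d_{\max}^2/S$. $SP_r(s,t)$ is the number of simple paths of length $r$ from $s$ to $t$, i.e. sequences $(s=b_0,b_1,\dots,b_{r-1},b_r=t)$ of pairwise distinct vertices with each $\{b_i,b_{i+1}\}$ an edge of the graph. *)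

From HB Require Import structures.
From mathcomp Require Import all_boot all_order all_algebra.
Set Implicit Arguments. Unset Strict Implicit. Unset Printing Implicit Defensive.
Import Order.TTheory GRing.Theory Num.Theory.
Local Open Scope ring_scope.

Section ChungLu.
Variables (R : realFieldType) (n : nat) (d : 'I_n -> R).

Definition CL_S : R := \sum_(i < n) d i.
Definition CL_S2 : R := \sum_(i < n) d i ^+ 2.
(* d_max (the d_i are positive, so 0 is a harmless neutral element) *)
Definition CL_dmax : R := \big[Num.max/0]_(i < n) d i.
Definition CL_pmax : R := CL_dmax ^+ 2 / CL_S.
Definition CL_p (i j : 'I_n) : R := d i * d j / CL_S.

(* A graph on {0..n-1} (loops allowed) is encoded by its edge set: an
   unordered pair {i,j} is stored as the ordered pair (i,j) with i <= j. *)
Definition graph_valid (A : {set 'I_n * 'I_n}) : bool :=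
  A \subset [set ij : 'I_n * 'I_n | (ij.1 <= ij.2)%N].

Definition is_edge (A : {set 'I_n * 'I_n}) (i j : 'I_n) : bool :=
  (if (i <= j)%N then (i, j) else (j, i)) \in A.

Definition CL_weight (A : {set 'I_n * 'I_n}) : R :=
  \prod_(ij : 'I_n * 'I_n | (ij.1 <= ij.2)%N)
     (if ij \in A then CL_p ij.1 ij.2 else 1 - CL_p ij.1 ij.2).

Definition SP (A : {set 'I_n * 'I_n}) (r : nat) (s t : 'I_n) : nat :=
  #|[set b : {ffun 'I_r.+1 -> 'I_n} |
      [&& injectiveb b, b ord0 == s, b ord_max == t &
          [forall i : 'I_r, is_edge A (b (inord i)) (b (inord i.+1))]]]|.

Definition E_SP (r : nat) (s t : 'I_n) : R :=
  \sum_(A : {set 'I_n * 'I_n} | graph_valid A) CL_weight A * (SP A r s t)%:R.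

End ChungLu.

(* By linearity of expectation, E[SP_r(s,t)] is the sum over simple paths
   s = b_0, ..., b_r = t of the probability that all their edges are present;
   the edges of a simple path are distinct, hence independent, so this is
   prod_i p_{b_i b_(i+1)} = p_st S^-(r-1) prod_(0<i<r) d_(b_i)^2.  Hence
   E[SP_r(s,t)] = p_st S^-(r-1) W_(r-1)({s,t}), where W_m(X) sums
   prod_i d_(c_i)^2 over injective sequences c of length m avoiding X.
   Choosing the first vertex gives W_(m+1)(X) = sum_(v \notin X) d_v^2 W_m(X+v),
   and the vertices of X carry at most |X| d_max^2 of the mass S_2, so by
   induction S_2^m - (|X| m + C(m,2)) d_max^2 S_2^(m-1) <= W_m(X).  For |X| = 2
   and m = r - 1 the collision count is C(r+1,2) - 1. *)

From HB Require Import structures.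
From mathcomp Require Import all_boot all_order all_algebra zify ring lra.
Set Implicit Arguments. Unset Strict Implicit. Unset Printing Implicit Defensive.
Import Order.TTheory GRing.Theory Num.Theory.
Local Open Scope ring_scope.

Section FinfunCons.
Variable T : finType.

Definition fcons m (v : T) (g : {ffun 'I_m -> T}) : {ffun 'I_m.+1 -> T} :=
  [ffun i => if unlift ord0 i is Some j then g j else v].

Lemma fcons0 m v (g : {ffun 'I_m -> T}) : fcons v g ord0 = v.
Proof. by rewrite ffunE unlift_none. Qed.

Lemma fconsS m v (g : {ffun 'I_m -> T}) j : fcons v g (lift ord0 j) = g j.
Proof. by rewrite ffunE liftK. Qed.

Lemma fcons_bij m : bijective (fun vg : T * {ffun 'I_m -> T} => fcons vg.1 vg.2).
Proof.
exists (fun c : {ffun 'I_m.+1 -> T} => (c ord0, [ffun j => c (lift ord0 j)])).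
  by move=> [v g] /=; rewrite fcons0; congr (_, _); apply/ffunP => j; rewrite ffunE fconsS.
move=> c /=; apply/ffunP => i; case: (unliftP ord0 i) => [j ->|->].
  by rewrite fconsS ffunE.
by rewrite fcons0.
Qed.

Definition avoids (X : {set T}) m (c : {ffun 'I_m -> T}) := [forall i, c i \notin X].

Lemma injective_avoids_fcons m X v (g : {ffun 'I_m -> T}) :
  injectiveb (fcons v g) && avoids X (fcons v g) =
  (v \notin X) && (injectiveb g && avoids (v |: X) g).
Proof.
apply/andP/andP => [[/injectiveP inj_c /forallP avX]|
                    [vX /andP[/injectiveP inj_g /forallP avvX]]].
  split; first by have := avX ord0; rewrite fcons0.
  apply/andP; split.
    by apply/injectiveP => i j eq_ij; apply: (@lift_inj _ ord0); apply: inj_c; rewrite !fconsS.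
  apply/forallP => j; rewrite !inE negb_or -(fconsS v) avX andbT.
  by apply: contra_neq (neq_lift ord0 j) => /esym; rewrite -{1}(fcons0 v g) => /inj_c.
split.
  apply/injectiveP => i i'.
  case: (unliftP ord0 i) => [j ->|->]; case: (unliftP ord0 i') => [j' ->|->];
    rewrite ?fconsS ?fcons0 //.
  - by move/inj_g ->.
  - by move=> gj; have := avvX j; rewrite gj !inE eqxx.
  - by move=> gj'; have := avvX j'; rewrite -gj' !inE eqxx.
apply/forallP => i; case: (unliftP ord0 i) => [j ->|->]; rewrite ?fconsS ?fcons0 //.
by have := avvX j; rewrite !inE negb_or => /andP[].
Qed.

End FinfunCons.

Section PathInterior.
Variables (T : finType) (s t : T).

Definition simple_path r (b : {ffun 'I_r.+1 -> T}) : bool :=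
  [&& injectiveb b, b ord0 == s & b ord_max == t].

Variable k : nat.

Definition close_path (c : {ffun 'I_k -> T}) : {ffun 'I_k.+2 -> T} :=
  [ffun i => if unlift ord0 i is Some j then
               if unlift ord_max j is Some l then c l else t
             else s].

Definition interior (b : {ffun 'I_k.+2 -> T}) : {ffun 'I_k -> T} :=
  [ffun i => b (lift ord0 (lift ord_max i))].

Lemma lift0_max : lift ord0 (ord_max : 'I_k.+1) = ord_max.
Proof. exact: val_inj. Qed.

Lemma close_path0 c : close_path c ord0 = s.
Proof. by rewrite ffunE unlift_none. Qed.

Lemma close_path_max c : close_path c ord_max = t.
Proof. by rewrite -lift0_max ffunE liftK unlift_none. Qed.

Lemma close_path_lift c i : close_path c (lift ord0 (lift ord_max i)) = c i.
Proof. by rewrite ffunE !liftK. Qed.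

Lemma interiorE b i : interior b i = b (inord i.+1).
Proof.
rewrite ffunE; congr (b _); apply: ord_inj.
by rewrite lift0 lift_max inordK // !ltnS ltnW.
Qed.

Lemma interiorK c : interior (close_path c) = c.
Proof. by apply/ffunP => i; rewrite ffunE close_path_lift. Qed.

Lemma close_pathK (b : {ffun 'I_k.+2 -> T}) :
  b ord0 = s -> b ord_max = t -> close_path (interior b) = b.
Proof.
move=> b0 bmax; apply/ffunP => i; rewrite ffunE.
case: (unliftP ord0 i) => [j ->|->] //; case: (unliftP ord_max j) => [l ->|->].
  by rewrite ffunE.
by rewrite lift0_max.
Qed.

Hypothesis neq_st : s != t.

Lemma simple_path_close_path c : simple_path (close_path c) = injectiveb c && avoids [set s; t] c.
Proof.
rewrite /simple_path close_path0 close_path_max !eqxx !andbT.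
apply/injectiveP/andP => [inj_p|[/injectiveP inj_c /forallP avc]].
  split.
    apply/injectiveP => i j; rewrite -!(close_path_lift c) => /inj_p.
    by move/lift_inj/lift_inj.
  apply/forallP => i; rewrite !inE negb_or.
  rewrite -(close_path_lift c) -(close_path0 c) -(close_path_max c) -lift0_max.
  by rewrite !(inj_eq inj_p) ![_ == ord0]eq_sym neq_lift (inj_eq (@lift_inj _ _)) eq_sym neq_lift.
have avst l : (c l != s) && (c l != t) by have := avc l; rewrite !inE negb_or.
move=> i i'; rewrite !ffunE.
case: (unliftP ord0 i) => [j ->|->]; case: (unliftP ord0 i') => [j' ->|->] //;
  rewrite ?unlift_none ?liftK.
- case: (unliftP ord_max j) => [l ->|->]; case: (unliftP ord_max j') => [l' ->|->] //;
    rewrite ?unlift_none ?liftK.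
  + by move/inj_c ->.
  + by move=> clt; have := avst l; rewrite clt eqxx andbF.
  + by move=> tcl; have := avst l'; rewrite -tcl eqxx andbF.
- case: (unliftP ord_max j) => [l ->|->]; rewrite ?unlift_none ?liftK.
    by move=> cls; have := avst l; rewrite cls eqxx.
  by move=> ts; move: neq_st; rewrite ts eqxx.
- case: (unliftP ord_max j') => [l ->|->]; rewrite ?unlift_none ?liftK.
    by move=> scl; have := avst l; rewrite -scl eqxx.
  by move=> st; move: neq_st; rewrite st eqxx.
Qed.

Lemma sum_simple_path_interior (R : nmodType) (F : {ffun 'I_k -> T} -> R) :
  \sum_(b : {ffun 'I_k.+2 -> T} | simple_path b) F (interior b) =
  \sum_(c : {ffun 'I_k -> T} | injectiveb c && avoids [set s; t] c) F c.
Proof.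
rewrite (reindex_onto close_path interior); last first.
  by move=> b /and3P[_ /eqP b0 /eqP bmax]; apply: close_pathK.
apply: eq_big => [c|c _]; last by rewrite interiorK.
by rewrite simple_path_close_path interiorK eqxx andbT.
Qed.

End PathInterior.

Section IndependentEvents.
Variables (R : comRingType) (I : finType) (P : {set I}) (p : I -> R).

Lemma sum_independent_supset (F : {set I}) : F \subset P ->
  \sum_(A : {set I} | (A \subset P) && (F \subset A))
     \prod_(i in P) (if i \in A then p i else 1 - p i)
  = \prod_(i in F) p i.
Proof.
move=> /subsetP sFP.
(* Expanding prod_i (f i + g i) gives one term per set A: it vanishes unless
   F \subset A \subset P, and then it is the weight of A. *)
pose f i := if i \in P then p i else 0.
pose g i := if i \in P then (if i \in F then 0 else 1 - p i) else 1.
have prod_fg : \prod_i (f i + g i) = \prod_(i in F) p i.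
  rewrite [RHS]big_mkcond; apply: eq_bigr => i _; rewrite /f /g.
  case: ifPn => [iP|iNP]; first by case: ifP; rewrite ?addr0 ?subrKC.
  by case: ifPn => [/sFP|]; rewrite ?(negbTE iNP) ?add0r.
rewrite -prod_fg bigA_distr [RHS](bigID (fun A : {set I} => (A \subset P) && (F \subset A))) /=.
rewrite [X in _ = _ + X]big1 ?addr0 => [|A /nandP notA].
  apply: eq_bigr => A /andP[/subsetP sAP /subsetP sFA].
  rewrite [RHS](bigID (mem P)) /= [X in _ = _ * X]big1 ?mulr1 => [|i iNP].
    apply: eq_bigr => i iP; rewrite /f /g iP.
    by case: ifPn => // iNA; case: ifPn => // /sFA; rewrite (negbTE iNA).
  by case: ifPn => [/sAP|]; rewrite /f /g (negbTE iNP).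
have [i fgi0] : exists i, (if i \in A then f i else g i) = 0.
  case: notA => [/subsetPn[i iA iNP]|/subsetPn[i iF iNA]].
    by exists i; rewrite iA /f (negbTE iNP).
  by exists i; rewrite (negbTE iNA) /g sFP // iF.
by rewrite (bigD1 i) //= fgi0 mul0r.
Qed.

End IndependentEvents.

Lemma ler_mul_lower (R : realDomainType) (A S x L M : R) :
  0 <= x -> 0 <= M -> S - x <= A -> A <= S -> L <= M ->
  S * L - x * M <= A * L.
Proof.
move=> x_ge0 M_ge0 SxA AS LM; have [L_ge0|L_lt0] := leP 0 L.
  by have := ler_wpM2r L_ge0 SxA; have := ler_wpM2l x_ge0 LM; lra.
by have := ler_wnM2r (ltW L_lt0) AS; have := mulr_ge0 x_ge0 M_ge0; lra.
Qed.

Definition collisions (m x : nat) : nat := x * m + 'C(m, 2).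

Lemma collisionsS m x : collisions m.+1 x = collisions m x.+1 + x.
Proof. rewrite /collisions binS bin1; lia. Qed.

Lemma collisions2_lt k : ((collisions k 2).*2 < k.+1 * (k.+1 + 1))%N.
Proof. have := mul_bin_diag k.+2 1; rewrite /collisions !binS !bin1 bin0; lia. Qed.

Section InjseqWeight.
Variables (R : realFieldType) (n : nat) (d : 'I_n -> R).

Local Notation S2 := (CL_S2 d).
Local Notation D := (CL_dmax d ^+ 2).

Definition injseq_weight m (X : {set 'I_n}) : R :=
  \sum_(c : {ffun 'I_m -> 'I_n} | injectiveb c && avoids X c) \prod_(i < m) d (c i) ^+ 2.

Lemma injseq_weight0 X : injseq_weight 0 X = 1.
Proof.
rewrite /injseq_weight (eq_bigl xpredT) => [|c]; last first.
  by apply/andP; split; [apply/injectiveP => -[] | apply/forallP => -[]].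
by rewrite (eq_bigr (fun=> 1)) => [|c _]; rewrite ?big_ord0 // sumr_const card_ffun !card_ord.
Qed.

Lemma injseq_weightS m X :
  injseq_weight m.+1 X = \sum_(v | v \notin X) d v ^+ 2 * injseq_weight m (v |: X).
Proof.
rewrite /injseq_weight big_mkcond (reindex _ (onW_bij _ (@fcons_bij _ m))) /=.
rewrite -(pair_bigA _ (fun v g => if injectiveb (fcons v g) && avoids X (fcons v g)
   then \prod_(i < m.+1) d (fcons v g i) ^+ 2 else 0)) /=.
rewrite [RHS]big_mkcond; apply: eq_bigr => v _.
case: (boolP (v \in X)) => vX /=.
  by apply: big1 => g _; rewrite injective_avoids_fcons vX.
rewrite mulr_sumr [RHS]big_mkcond; apply: eq_bigr => g _.
rewrite injective_avoids_fcons vX /=; case: ifP => // _.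
by rewrite big_ord_recl fcons0; congr (_ * _); apply: eq_bigr => i _; rewrite fconsS.
Qed.

Hypothesis d_gt0 : forall i, 0 < d i.

Lemma sqr_le_dmax i : d i ^+ 2 <= D.
Proof.
have d_le : d i <= CL_dmax d by rewrite /CL_dmax (bigD1 i) //= le_max lexx.
by rewrite ler_pXn2r ?nnegrE // (le_trans (ltW (d_gt0 i))).
Qed.

Lemma sum_sqr_notin_bounds (X : {set 'I_n}) :
  S2 - #|X|%:R * D <= \sum_(v | v \notin X) d v ^+ 2 <= S2.
Proof.
rewrite /CL_S2 (bigID (mem X)) /=.
have inX_ge0 : 0 <= \sum_(i in X) d i ^+ 2 by apply: sumr_ge0 => i _; apply: sqr_ge0.
have inX_le : \sum_(i in X) d i ^+ 2 <= #|X|%:R * D.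
  by rewrite -sum1_card natr_sum mulr_suml; apply: ler_sum => i _; rewrite mul1r sqr_le_dmax.
by apply/andP; split; lra.
Qed.

Lemma injseq_weight_lower m (X : {set 'I_n}) :
  S2 ^+ m.+1 - (collisions m #|X|)%:R * D * S2 ^+ m <= S2 * injseq_weight m X.
Proof.
have S2_ge0 : 0 <= S2 by apply: sumr_ge0 => i _; apply: sqr_ge0.
have D_ge0 : 0 <= D := sqr_ge0 _.
elim: m X => [|m IHm] X.
  by rewrite injseq_weight0 /collisions muln0 add0n !mul0r subr0 expr1 mulr1.
set L := S2 ^+ m.+1 - (collisions m #|X|.+1)%:R * D * S2 ^+ m.
have -> : S2 ^+ m.+2 - (collisions m.+1 #|X|)%:R * D * S2 ^+ m.+1
          = S2 * L - #|X|%:R * D * S2 ^+ m.+1.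
  by rewrite /L collisionsS natrD !exprS; ring.
have /andP[lowA upA] := sum_sqr_notin_bounds X.
apply: le_trans (ler_mul_lower _ _ lowA upA _) _.
- exact: mulr_ge0.
- exact: exprn_ge0.
- by rewrite lerBlDr lerDl; apply: mulr_ge0; [apply: mulr_ge0 | apply: exprn_ge0].
rewrite injseq_weightS mulr_sumr mulr_suml; apply: ler_sum => v vX.
rewrite mulrCA ler_wpM2l ?sqr_ge0 //.
by have := IHm (v |: X); rewrite cardsU1 vX.
Qed.

End InjseqWeight.

Section ChungLuPaths.
Variables (R : realFieldType) (n : nat) (d : 'I_n -> R).

Definition opair (i j : 'I_n) : 'I_n * 'I_n := if (i <= j)%N then (i, j) else (j, i).

Definition path_edges r (b : {ffun 'I_r.+1 -> 'I_n}) : {set 'I_n * 'I_n} :=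
  [set opair (b (inord i)) (b (inord i.+1)) | i : 'I_r].

Lemma opair_inj i j i' j' : opair i j = opair i' j' -> (i = i' /\ j = j') \/ (i = j' /\ j = i').
Proof. by rewrite /opair; case: ifP => _; case: ifP => _ [-> ->]; [left|right|right|left]. Qed.

Lemma CL_pC i j : CL_p d i j = CL_p d j i.
Proof. by rewrite /CL_p [d i * _]mulrC. Qed.

Lemma CL_p_opair i j : CL_p d (opair i j).1 (opair i j).2 = CL_p d i j.
Proof. by rewrite /opair; case: ifP => _ //; rewrite CL_pC. Qed.

Lemma path_edges_ordered r (b : {ffun 'I_r.+1 -> 'I_n}) :
  path_edges b \subset [set ij : 'I_n * 'I_n | (ij.1 <= ij.2)%N].
Proof.
apply/subsetP => _ /imsetP[i _ ->]; rewrite inE /opair.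
by case: ifPn => //=; rewrite -ltnNge => /ltnW.
Qed.

Lemma prod_path_edges r (b : {ffun 'I_r.+1 -> 'I_n}) : injective b ->
  \prod_(e in path_edges b) CL_p d e.1 e.2 =
  \prod_(i < r) CL_p d (b (inord i)) (b (inord i.+1)).
Proof.
move=> inj_b; rewrite big_imset /= => [|i j _ _ /opair_inj].
  by apply: eq_bigr => i _; rewrite CL_p_opair.
have inordK0 (l : 'I_r) : (inord l : 'I_r.+1) = l :> nat by rewrite inordK // leqW.
have inordK1 (l : 'I_r) : (inord l.+1 : 'I_r.+1) = l.+1 :> nat by rewrite inordK // ltnS.
case=> [[/inj_b/(congr1 (@nat_of_ord _)) + _]|[/inj_b/(congr1 (@nat_of_ord _)) +
        /inj_b/(congr1 (@nat_of_ord _))]]; rewrite !inordK0 ?inordK1; first exact: ord_inj.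
lia.
Qed.

Lemma E_SP_sum_simple_path r s t : E_SP d r s t =
  \sum_(b : {ffun 'I_r.+1 -> 'I_n} | simple_path s t b)
     \prod_(i < r) CL_p d (b (inord i)) (b (inord i.+1)).
Proof.
pose V := [set ij : 'I_n * 'I_n | (ij.1 <= ij.2)%N].
have CL_weightE A : CL_weight d A =
    \prod_(ij in V) (if ij \in A then CL_p d ij.1 ij.2 else 1 - CL_p d ij.1 ij.2).
  by apply: eq_bigl => ij; rewrite inE.
transitivity (\sum_(A | graph_valid A) \sum_(b : {ffun 'I_r.+1 -> 'I_n} | simple_path s t b)
                 (if path_edges b \subset A then CL_weight d A else 0)).
  apply: eq_bigr => A _; rewrite /SP -sumr_const -big_mkcondr mulr_sumr.
  apply: eq_big => [b|b _]; last by rewrite mulr1.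
  rewrite inE /simple_path -!andbA; congr [&& _, _, _ & _].
  apply/forallP/subsetP => [on_A _ /imsetP[i _ ->]|sub_A i]; first exact: on_A.
  by apply: sub_A; apply/imsetP; exists i.
rewrite exchange_big; apply: eq_bigr => b /andP[/injectiveP inj_b _].
rewrite -big_mkcondr (eq_bigr _ (fun A _ => CL_weightE A)).
by rewrite sum_independent_supset ?path_edges_ordered ?prod_path_edges.
Qed.

Lemma prod_simple_path k s t (b : {ffun 'I_k.+2 -> 'I_n}) :
  b ord0 = s -> b ord_max = t ->
  \prod_(i < k.+1) CL_p d (b (inord i)) (b (inord i.+1)) =
  CL_p d s t / CL_S d ^+ k * \prod_(i < k) d (interior b i) ^+ 2.
Proof.
move=> b0 bmax.
have prod_src : \prod_(i < k.+1) d (b (inord i)) = d s * \prod_(i < k) d (interior b i).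
  rewrite big_ord_recl; congr (_ * _); last by apply: eq_bigr => i _; rewrite interiorE.
  by rewrite -b0; congr (d (b _)); apply: ord_inj; rewrite inordK.
have prod_dst : \prod_(i < k.+1) d (b (inord i.+1)) = \prod_(i < k) d (interior b i) * d t.
  rewrite big_ord_recr; congr (_ * _); first by apply: eq_bigr => i _; rewrite interiorE.
  by rewrite -bmax; congr (d (b _)); apply: ord_inj; rewrite inordK.
rewrite /CL_p (eq_bigr (fun i : 'I_k.+1 =>
  d (b (inord i)) * d (b (inord i.+1)) * (CL_S d)^-1)) //.
rewrite !big_split /= prod_src prod_dst prodr_const card_ord -exprVn.
move: (CL_S d)^-1 => Si; rewrite exprS; ring.
Qed.

Lemma E_SP_injseq_weight k s t : s != t ->
  E_SP d k.+1 s t = CL_p d s t / CL_S d ^+ k * injseq_weight d k [set s; t].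
Proof.
move=> neq_st; rewrite E_SP_sum_simple_path.
rewrite (eq_bigr (fun b => CL_p d s t / CL_S d ^+ k * \prod_(i < k) d (interior b i) ^+ 2)).
  by rewrite -mulr_sumr (sum_simple_path_interior neq_st (fun c => \prod_(i < k) d (c i) ^+ 2)).
by move=> b /and3P[_ /eqP b0 /eqP bmax]; apply: prod_simple_path.
Qed.

End ChungLuPaths.

Unset Implicit Arguments.

(* [hmax] only makes every p_ij a probability; the bound does not need it. *)
Theorem lemma2 (R : realFieldType) (n : nat) (d : 'I_n -> R)
  (hpos : forall i, 0 < d i)
  (hmax : forall i, d i ^+ 2 <= CL_S d)
  (s t : 'I_n) (hst : s != t) (r : nat) (hr : (1 <= r)%N) :
  CL_p d s t * (CL_S2 d / CL_S d) ^+ (r - 1)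
    * (1 - (r * (r + 1))%:R * CL_pmax d / 2 * (CL_S d / CL_S2 d))
  <= E_SP d r s t.
Proof.
case: r hr => // k _; rewrite subn1 /= E_SP_injseq_weight //.
have S_gt0 : 0 < CL_S d by rewrite /CL_S (bigD1 s) //= ltr_pwDl // sumr_ge0 // => i _; apply: ltW.
have S2_gt0 : 0 < CL_S2 d.
  by rewrite /CL_S2 (bigD1 s) //= ltr_pwDl ?exprn_gt0 // sumr_ge0 // => i _; apply: sqr_ge0.
have p_gt0 : 0 < CL_p d s t by rewrite /CL_p divr_gt0 ?mulr_gt0.
have := injseq_weight_lower hpos k [set s; t]; rewrite cards2 hst.
have := collisions2_lt k; rewrite -(ltr_nat R) -muln2 natrM.
rewrite /CL_pmax; move: (injseq_weight _ _ _) (collisions k 2) (k.+1 * _)%N => W c N cN lowW.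
set S := CL_S d in S_gt0 *; set S2 := CL_S2 d in S2_gt0 lowW *.
set D := CL_dmax d ^+ 2 in lowW *.
rewrite (_ : _ * _ * _ =
  CL_p d s t / S ^+ k * ((S2 ^+ k.+1 - N%:R / 2 * D * S2 ^+ k) / S2)); last first.
  by rewrite expr_div_n exprS; field; rewrite !lt0r_neq0 // exprn_gt0.
rewrite ler_pM2l ?(divr_gt0 p_gt0 (exprn_gt0 _ S_gt0)) // ler_pdivrMr // [W * _]mulrC.
apply: le_trans lowW; rewrite lerD2l lerN2; apply: ler_wpM2r; first exact/exprn_ge0/ltW.
by apply: ler_wpM2r; [exact: sqr_ge0 | rewrite ler_pdivlMr //; apply: ltW].
Qed.
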